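(* For every $n\in\mathbb N$ there is a deterministic online monotone embedding (which may depend on $n$) of up to $n$ points from any metric space into HSTs with distortion $n-1$, and this is tight: no deterministic online monotone embedding of up to $n$ points from all metric spaces into HSTs achieves distortion less than $n-1$. Without prior knowledge of $n$ (i.e., a single embedding used for all $n$), the optimal achievable distortion for sequences of $n$ points is $n\cdot\tilde\Theta(\log n)$, where $\tilde\Theta$ hides factors polylogarithmic in $\log n$; this bound is also tight.
   Context: For $\mu \ge 1$, a $\mu$-HST is a metric space whose points are the leaves of a rooted tree $T$; every node $v$ has a weight $\varphi(v)\ge 0$, with $\varphi(v)=0$ iff $v$ is a leaf, and $\varphi(v)\le\varphi(u)/\mu$ whenever $v$ is a child of $u$; the distance between leaves $u,v$ is $\varphi(\mathrm{lca}(u,v))$. ''HSTs'' denotes the family of such metrics. An update sequence on $(X,d_X)$ is a sequence of pairs $(v_t,o_t)\in X\times\{+,-\}$ ($v_t$ arrives if $o_t=+$, leaves if $o_t=-$), with alive sets $L_0=\varnothing$, $L_t=L_{t-1}\cup\{v_t\}$ or $L_{t-1}\setminus\{v_t\}$ accordingly. A deterministic online monotone embedding into a family $\mathcal M$ receives $\sigma_1,\sigma_2,\dots$ one at a time and after $\sigma_t$ (depending only on $\sigma_1,\dots,\sigma_t$) outputs a metric $d_t$ on $L_t$ with: $(L_t,d_t)\in\mathcal M$; $d_t(u,v)\ge d_X(u,v)$ for all $u,v\in L_t$ (non-contractive); $d_t(u,v)\le d_{t-1}(u,v)$ for all $u,v\in L_{t-1}\cap L_t$. It has distortion $\lambda$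 if $d_t(u,v)\le\lambda d_X(u,v)$ for all sequences in the considered class, all $t$, and all $u,v\in L_t$. ''Up to $n$ points'' refers to sequences in which at most $n$ points arrive. *)

From Stdlib Require Import Reals List.
Import ListNotations.
Open Scope R_scope.
Set Implicit Arguments.

Definition is_metric (X : Type) (d : X -> X -> R) : Prop :=
  (forall x y, 0 <= d x y) /\
  (forall x y, d x y = 0 <-> x = y) /\
  (forall x y, d x y = d y x) /\
  (forall x y z, d x z <= d x y + d y z).

(* A rooted tree whose leaves are labelled by points of X; internal nodes
   carry their weight phi(v). Leaves have weight 0. *)
Inductive tree (X : Type) : Type :=
| Leaf : X -> tree X
| Node : R -> list (tree X) -> tree X.
Arguments Leaf {X} _.
Arguments Node {X} _ _.

Fixpoint leaves (X : Type) (t : tree X) : list X :=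
  match t with
  | Leaf x => [x]
  | Node _ cs => flat_map (@leaves X) cs
  end.

Definition weight (X : Type) (t : tree X) : R :=
  match t with Leaf _ => 0 | Node w _ => w end.

(* mu-HST condition: internal nodes have at least one child (so that a node
   is a leaf iff it has weight 0), positive weight, and each child has weight
   at most the parent's weight divided by mu. *)
Inductive hst_wf (X : Type) (mu : R) : tree X -> Prop :=
| hst_wf_leaf x : hst_wf mu (Leaf x)
| hst_wf_node w cs :
    cs <> [] -> 0 < w ->
    (forall c, In c cs -> hst_wf mu c /\ weight c <= w / mu) ->
    hst_wf mu (Node w cs).

Inductive lca_weight (X : Type) : tree X -> X -> X -> R -> Prop :=
| lca_leaf x : lca_weight (Leaf x) x x 0
| lca_down w cs c u v r :
    In c cs -> lca_weight c u v r -> lca_weight (Node w cs) u v r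
| lca_here w cs cu cv u v :
    In cu cs -> In cv cs -> cu <> cv ->
    In u (leaves cu) -> In v (leaves cv) -> lca_weight (Node w cs) u v w.

(* The empty metric space is counted as an HST. *)
Definition in_HSTs (X : Type) (L : X -> Prop) (dt : X -> X -> R) : Prop :=
  (forall x, ~ L x) \/
  exists (mu : R) (T : tree X),
    1 <= mu /\ hst_wf mu T /\ NoDup (leaves T) /\
    (forall x, L x <-> In x (leaves T)) /\
    (forall u v, L u -> L v -> lca_weight T u v (dt u v)).

(* An (finite prefix of an) update sequence, in chronological order:
   (v, true) means v arrives (+), (v, false) means v leaves (-). *)
Definition update_seq (X : Type) := list (X * bool).

Definition alive_step (X : Type) (L : X -> Prop) (p : X * bool) : X -> Prop :=
  fun x => if snd p then (x = fst p \/ L x) else (x <> fst p /\ L x).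

(* alive s = L_t where t = length s *)
Definition alive (X : Type) (s : update_seq X) : X -> Prop :=
  fold_left (@alive_step X) s (fun _ => False).

Definition at_most_n_points (X : Type) (n : nat) (s : update_seq X) : Prop :=
  exists l : list X, (length l <= n)%nat /\ forall x, In (x, true) s -> In x l.

(* A deterministic online embedding is a map from the history
   sigma_1 ... sigma_t to the output metric d_t (only its values on L_t matter);
   it thus depends only on sigma_1, ..., sigma_t. *)
Definition online_embedding (X : Type) := update_seq X -> X -> X -> R.

Definition monotone_HST_embedding (X : Type) (d : X -> X -> R)
    (C : update_seq X -> Prop) (E : online_embedding X) : Prop :=
  forall (s : update_seq X) (sg : X * bool), C (s ++ [sg]) ->
    let L := alive (s ++ [sg]) in
    let L' := alive s in
    in_HSTs L (E (s ++ [sg])) /\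
    (forall u v, L u -> L v -> d u v <= E (s ++ [sg]) u v) /\
    (forall u v, L' u -> L' v -> L u -> L v -> E (s ++ [sg]) u v <= E s u v).

Definition has_distortion (X : Type) (d : X -> X -> R)
    (C : update_seq X -> Prop) (E : online_embedding X) (lam : R) : Prop :=
  forall s, C s -> forall u v, alive s u -> alive s v -> E s u v <= lam * d u v.

(* When the point a arrives it gets a rank (its position in the arrival
   order), and every pair gets the stretched length
     phi(a, b) = c_(max (rank a) (rank b)) * d(a, b),
   which never changes afterwards.  The output is the subdominant ultrametric of phi on
   the points arrived so far (the minimax length of walks): new points only add walks, so
   it is monotone; it is at most phi; and a finite ultrametric is the leaf metric of a
   1-HST.  It is non-contractive when sum_j 1/c_j <= 1: on a walk all of whose hops have
   phi-length at most m, the hop leaving a has d-length at most m / c_(rank a), and after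
   removing loops each point is left at most once.  The constant c_j = n - 1 gives
   distortion n - 1; c_j ~ j log j (log log j)^2 works for all n at once.

   Let points p_0, p_1, ... of the real line arrive in this order.  In the
   final HST the distance of p_0 and p_N is at most the largest distance of consecutive
   points p_i, p_(i+1), and by monotonicity this is at most its value at any earlier time
   after p_(i+1) arrived, i.e. at most (distortion) * |p_(i+1) - p_i|.  Non-contraction
   then bounds |p_N - p_0|.  Unit gaps with n points force distortion n - 1; gaps
   1/(T log T), where T is a time at which both endpoints are alive, are then all
   embedded at distance at most 1 under distortion T log T, although they sum to about
   log log N. *)

From Stdlib Require Import Reals List Lra Lia ClassicalDescription RList.
Import ListNotations.
Open Scope R_scope.
Set Implicit Arguments.
Unset Strict Implicit.

Lemma NoDup_app_not_in_both (A : Type) (l1 l2 : list A) x :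
  NoDup (l1 ++ l2) -> In x l1 -> ~ In x l2.
Proof.
  induction l1 as [|a l1 IH]; simpl; intros Hn H1 H2; [easy|].
  inversion Hn as [|? ? Ha Hn']; subst. destruct H1 as [<-|H1].
  - apply Ha, in_or_app; now right.
  - exact (IH Hn' H1 H2).
Qed.

Section HSTLeafMetric.
Variable X : Type.
Implicit Types (T : tree X) (cs : list (tree X)).

Lemma NoDup_leaves_child cs c :
  NoDup (flat_map (@leaves X) cs) -> In c cs -> NoDup (leaves c).
Proof.
  induction cs as [|a cs IH]; simpl; [easy|]. intros Hn [<-|H].
  - eapply NoDup_app_remove_r; eauto.
  - apply IH; auto. eapply NoDup_app_remove_l; eauto.
Qed.

Lemma child_of_common_leaf cs c1 c2 x :
  NoDup (flat_map (@leaves X) cs) -> In c1 cs -> In c2 cs ->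
  In x (leaves c1) -> In x (leaves c2) -> c1 = c2.
Proof.
  induction cs as [|a cs IH]; simpl; [easy|]. intros Hn H1 H2 Hx1 Hx2.
  destruct H1 as [<-|H1]; destruct H2 as [<-|H2]; auto.
  - exfalso. apply (NoDup_app_not_in_both Hn Hx1). apply in_flat_map; eauto.
  - exfalso. apply (NoDup_app_not_in_both Hn Hx2). apply in_flat_map; eauto.
  - apply IH; auto. eapply NoDup_app_remove_l; eauto.
Qed.

Lemma hst_wf_Node_inv mu w cs :
  hst_wf mu (Node w cs) -> 0 < w /\ forall c, In c cs -> hst_wf mu c /\ weight c <= w / mu.
Proof. intros H; inversion H; subst; auto. Qed.

Lemma lca_weight_Node_inv w cs u v r :
  lca_weight (Node w cs) u v r -> r = w \/ exists c, In c cs /\ lca_weight c u v r.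
Proof. intros H; inversion H; subst; eauto. Qed.

Lemma lca_weight_leaves T u v r :
  lca_weight T u v r -> In u (leaves T) /\ In v (leaves T).
Proof.
  induction 1; simpl; auto.
  - destruct IHlca_weight; split; apply in_flat_map; eauto.
  - split; apply in_flat_map; eauto.
Qed.

Lemma lca_weight_nonneg mu T u v r : hst_wf mu T -> lca_weight T u v r -> 0 <= r.
Proof.
  intros Hw H. induction H as [|w cs c u v r Hc _ IH|].
  - lra.
  - apply IH, (hst_wf_Node_inv Hw), Hc.
  - apply hst_wf_Node_inv in Hw as [Hp _]. lra.
Qed.

Lemma lca_weight_le_weight mu T u v r :
  1 <= mu -> hst_wf mu T -> lca_weight T u v r -> r <= weight T.
Proof.
  intros Hmu Hw H. induction H as [x|w cs c u v r Hc _ IH|]; simpl; [lra| |lra].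
  apply hst_wf_Node_inv in Hw as [Hp Hcs]. destruct (Hcs c Hc) as [Hwc Hle].
  specialize (IH Hwc).
  assert (w / mu <= w) by (apply Rmult_le_reg_r with mu; field_simplify; nra).
  lra.
Qed.

Lemma lca_weight_diag T u r : NoDup (leaves T) -> lca_weight T u u r -> r = 0.
Proof.
  intros Hn H. remember u as v eqn:Ev in H at 2.
  revert Hn Ev. induction H as [|w cs c u v r Hc _ IH|w cs cu cv u v Hu Hv Hne Hxu Hxv];
    intros Hn Ev; subst; auto.
  - apply IH; auto. eapply NoDup_leaves_child; eauto.
  - exfalso. exact (Hne (child_of_common_leaf Hn Hu Hv Hxu Hxv)).
Qed.

Lemma lca_weight_ultra mu T x y z a b c :
  1 <= mu -> hst_wf mu T -> NoDup (leaves T) ->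
  lca_weight T x z c -> lca_weight T x y a -> lca_weight T y z b -> c <= Rmax a b.
Proof.
  intros Hmu Hw Hn H. revert a b Hw Hn.
  induction H as [x|w cs c0 x z c Hc Hxz IH|w cs cx cz x z Hcx Hcz Hne Hx Hz];
    intros a b Hw Hn Ha Hb; simpl in Hn.
  - pose proof (lca_weight_nonneg Hw Ha). pose proof (Rmax_l a b). lra.
  - pose proof (hst_wf_Node_inv Hw) as [_ Hcs]. destruct (Hcs c0 Hc) as [Hwc _].
    assert (Hcw : c <= w)
      by (apply (lca_weight_le_weight (u := x) (v := z) Hmu Hw); econstructor; eauto).
    destruct (lca_weight_Node_inv Ha) as [->|[c1 [Hc1 Ha1]]].
    { pose proof (Rmax_l w b). lra. }
    destruct (lca_weight_Node_inv Hb) as [->|[c2 [Hc2 Hb2]]].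
    { pose proof (Rmax_r a w). lra. }
    destruct (lca_weight_leaves Hxz) as [Hx Hz].
    assert (c1 = c0) as ->
      by exact (child_of_common_leaf Hn Hc1 Hc (proj1 (lca_weight_leaves Ha1)) Hx).
    assert (c2 = c0) as ->
      by exact (child_of_common_leaf Hn Hc2 Hc (proj2 (lca_weight_leaves Hb2)) Hz).
    apply IH; auto. eapply NoDup_leaves_child; eauto.
  - destruct (lca_weight_Node_inv Ha) as [->|[c1 [Hc1 Ha1]]]; [apply Rmax_l|].
    destruct (lca_weight_Node_inv Hb) as [->|[c2 [Hc2 Hb2]]]; [apply Rmax_r|].
    destruct (lca_weight_leaves Ha1) as [Hx1 Hy1]. destruct (lca_weight_leaves Hb2) as [Hy2 Hz2].
    exfalso. apply Hne.
    rewrite <- (child_of_common_leaf Hn Hc1 Hcx Hx1 Hx).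
    rewrite <- (child_of_common_leaf Hn Hc2 Hcz Hz2 Hz).
    exact (child_of_common_leaf Hn Hc1 Hc2 Hy1 Hy2).
Qed.

End HSTLeafMetric.

Lemma in_HSTs_diag (X : Type) (L : X -> Prop) dt x : in_HSTs L dt -> L x -> dt x x = 0.
Proof.
  intros [Hempty|[mu [T [_ [_ [Hn [_ Hlca]]]]]]] Hx; [now destruct (Hempty x)|].
  exact (lca_weight_diag Hn (Hlca x x Hx Hx)).
Qed.

Lemma in_HSTs_ultra (X : Type) (L : X -> Prop) dt x y z :
  in_HSTs L dt -> L x -> L y -> L z -> dt x z <= Rmax (dt x y) (dt y z).
Proof.
  intros [Hempty|[mu [T [Hmu [Hw [Hn [_ Hlca]]]]]]] Hx Hy Hz; [now destruct (Hempty x)|].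
  eapply lca_weight_ultra; eauto.
Qed.

Section UltrametricToHST.
Variable X : Type.
Variable Q : X -> Prop.
Variable U : X -> X -> R.
Hypothesis U_diag : forall x, Q x -> U x x = 0.
Hypothesis U_pos : forall x y, Q x -> Q y -> x <> y -> 0 < U x y.
Hypothesis U_sym : forall x y, Q x -> Q y -> U x y = U y x.
Hypothesis U_ultra : forall x y z, Q x -> Q y -> Q z -> U x z <= Rmax (U x y) (U y z).

Lemma ultrametric_le_of_center x0 u v M : Q x0 -> Q u -> Q v ->
  U x0 u <= M -> U x0 v <= M -> U u v <= M.
Proof.
  intros Hx0 Hu Hv Hxu Hxv. eapply Rle_trans; [apply (U_ultra (y := x0)); auto|].
  rewrite U_sym by auto. apply Rmax_lub; auto.
Qed.

Lemma ultrametric_isosceles x0 u v : Q x0 -> Q u -> Q v ->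
  U x0 u < U x0 v -> U u v = U x0 v.
Proof.
  intros Hx0 Hu Hv Hlt. apply Rle_antisym.
  - apply ultrametric_le_of_center with x0; auto; lra.
  - pose proof (U_ultra Hx0 Hu Hv) as Hult. apply Rmax_Rle in Hult as [Hult|Hult]; lra.
Qed.

(* [far] consists of the points at maximal distance from x0. *)
Lemma ultrametric_split l x0 y :
  (forall x, In x l -> Q x) -> NoDup l -> In x0 l -> In y l -> x0 <> y ->
  exists M near far,
    0 < M /\ In x0 near /\ (exists z, In z far) /\ NoDup near /\ NoDup far /\
    (length near + length far = length l)%nat /\
    (forall z, In z l <-> In z near \/ In z far) /\
    (forall z, In z near -> ~ In z far) /\
    (forall u v, In u l -> In v l -> U u v <= M) /\
    (forall u v, In u near -> In v far -> U u v = M).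
Proof.
  intros HQ Hnd Hx0 Hy Hx0y.
  set (M := MaxRlist (map (U x0) l)).
  assert (HM : forall z, In z l -> U x0 z <= M)
    by (intros; apply MaxRlist_P1, in_map; auto).
  assert (HMz : exists zM, In zM l /\ U x0 zM = M).
  { destruct (proj1 (in_map_iff (U x0) l M)) as [zM [E HzM]]; eauto.
    apply MaxRlist_P2. exists (U x0 y); apply in_map; auto. }
  destruct HMz as [zM [HzM HUzM]].
  set (is_near := fun z => if Rlt_dec (U x0 z) M then true else false).
  exists M, (filter is_near l), (filter (fun z => negb (is_near z)) l).
  assert (Hnear : forall z, In z (filter is_near l) <-> In z l /\ U x0 z < M).
  { intros z. rewrite filter_In. unfold is_near.
    destruct (Rlt_dec (U x0 z) M); split; intros [Hz H]; split; auto; easy. }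
  assert (Hfar : forall z,
             In z (filter (fun z => negb (is_near z)) l) <-> In z l /\ U x0 z = M).
  { intros z. rewrite filter_In. unfold is_near.
    destruct (Rlt_dec (U x0 z) M); simpl; split; intros [Hz H]; split; auto; try easy.
    - lra.
    - pose proof (HM z Hz). lra. }
  split; [|split; [|split; [|split; [|split; [|split; [|split; [|split; [|split]]]]]]]].
  - apply Rlt_le_trans with (U x0 y); auto.
  - apply Hnear. rewrite U_diag by auto. split; auto.
    apply Rlt_le_trans with (U x0 y); auto.
  - exists zM. apply Hfar; auto.
  - apply NoDup_filter; auto.
  - apply NoDup_filter; auto.
  - apply filter_length.
  - intros z. rewrite Hnear, Hfar. split; [|intros [[? ?]|[? ?]]; auto].
    intros Hz. destruct (Rlt_dec (U x0 z) M); [left|right]; split; auto.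
    pose proof (HM z Hz). lra.
  - intros z Hz1 Hz2. apply Hnear in Hz1. apply Hfar in Hz2. lra.
  - intros u v Hu Hv. apply ultrametric_le_of_center with x0; auto.
  - intros u v Hu Hv. apply Hnear in Hu as [Hu Hu']. apply Hfar in Hv as [Hv <-].
    apply ultrametric_isosceles; auto.
Qed.

Definition hst_realizes (l : list X) (T : tree X) : Prop :=
  hst_wf 1 T /\ NoDup (leaves T) /\ (forall x, In x l <-> In x (leaves T)) /\
  (forall u v, In u l -> In v l -> lca_weight T u v (U u v)) /\
  (forall B, (forall u v, In u l -> In v l -> U u v <= B) -> weight T <= B).

Lemma hst_realizes_singleton x : Q x -> hst_realizes [x] (Leaf x).
Proof.
  intros Hx. split; [constructor|split; [repeat constructor; easy|split; [easy|split]]].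
  - intros u v [<-|[]] [<-|[]]. rewrite U_diag by auto. constructor.
  - intros B HB. simpl. rewrite <- (U_diag Hx). apply HB; simpl; auto.
Qed.

Lemma hst_realizes_exists n l : (length l <= n)%nat -> NoDup l -> l <> [] ->
  (forall x, In x l -> Q x) -> exists T, hst_realizes l T.
Proof.
  revert l. induction n as [|n IH]; intros l Hlen Hnd Hne HQ.
  { destruct l; simpl in *; [easy|lia]. }
  destruct l as [|x0 [|y rest]];
    [easy|exists (Leaf x0); apply hst_realizes_singleton; auto with datatypes|].
  assert (Hx0y : x0 <> y) by (intros <-; inversion Hnd as [|? ? Hnin]; apply Hnin; simpl; auto).
  destruct (@ultrametric_split _ x0 y HQ Hnd) as
    [M [near [far [HM [Hx0 [[zf Hzf] [Hndn [Hndf [Hlenl [Hparts [Hdisj [Hdiam Hcross]]]]]]]]]]]];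
    simpl; auto.
  assert (HQn : forall x, In x near -> Q x) by (intros x Hx; apply HQ, Hparts; auto).
  assert (HQf : forall x, In x far -> Q x) by (intros x Hx; apply HQ, Hparts; auto).
  destruct (IH near) as [Tn [Hwn [Hndn' [Hln [Hlcan Hboundn]]]]]; auto.
  { destruct far; [easy|]. simpl in *. lia. }
  { intros E; rewrite E in Hx0; easy. }
  destruct (IH far) as [Tf [Hwf [Hndf' [Hlf [Hlcaf Hboundf]]]]]; auto.
  { destruct near; [easy|]. simpl in *. lia. }
  { intros E; rewrite E in Hzf; easy. }
  assert (Htrees : Tn <> Tf).
  { intros E. apply (Hdisj x0 Hx0). apply Hlf. rewrite <- E. apply Hln, Hx0. }
  exists (Node M [Tn; Tf]). split; [|split; [|split; [|split]]]; simpl; rewrite ?app_nil_r.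
  - constructor; [easy|auto|]. rewrite Rdiv_1_r.
    intros c [<-|[<-|[]]]; split; auto;
      [apply Hboundn|apply Hboundf]; intros u v Hu Hv; apply Hdiam; apply Hparts; auto.
  - apply NoDup_app; auto. intros a Ha Hb. apply (Hdisj a); [apply Hln|apply Hlf]; auto.
  - intros z. rewrite in_app_iff, <- Hln, <- Hlf. apply Hparts.
  - intros u v Hu Hv. apply Hparts in Hu, Hv.
    destruct Hu as [Hu|Hu]; destruct Hv as [Hv|Hv].
    + apply lca_down with Tn; simpl; auto.
    + rewrite Hcross by auto.
      apply lca_here with Tn Tf; simpl; auto; [apply Hln|apply Hlf]; auto.
    + rewrite U_sym, Hcross by auto.
      apply lca_here with Tf Tn; simpl; auto; [apply Hlf|apply Hln]; auto.
    + apply lca_down with Tf; simpl; auto.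
  - intros B HB. rewrite <- (Hcross x0 zf) by auto. apply HB; apply Hparts; auto.
Qed.

Lemma ultrametric_in_HSTs l : NoDup l -> (forall x, Q x <-> In x l) -> in_HSTs Q U.
Proof.
  intros Hnd Hl. destruct l as [|x0 l].
  { left. intros x Hx. apply Hl in Hx. easy. }
  destruct (@hst_realizes_exists (length (x0 :: l)) (x0 :: l))
    as [T [Hw [HndT [HlT [Hlca _]]]]]; auto.
  - easy.
  - intros x. apply Hl.
  - right. exists 1, T. split; [lra|]. repeat split; auto.
    + intros Hx. apply HlT, Hl, Hx.
    + intros Hx. apply Hl, HlT, Hx.
    + intros u v Hu Hv. apply Hlca; apply Hl; auto.
Qed.
End UltrametricToHST.

Definition eq_dec_classic {X : Type} (x y : X) : {x = y} + {x <> y} :=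
  excluded_middle_informative (x = y).

Lemma NoDup_remove_classic (X : Type) (x : X) l :
  NoDup l -> NoDup (remove eq_dec_classic x l).
Proof.
  induction l as [|a l IH]; simpl; intros Hn; auto.
  inversion Hn; subst. destruct (eq_dec_classic x a); auto. constructor; auto.
  intros H. apply in_remove in H. tauto.
Qed.

Section ArrivedPoints.
Variable X : Type.
Implicit Types (s : update_seq X) (l : list X).

Lemma alive_snoc s p x :
  alive (s ++ [p]) x <-> (if snd p then x = fst p \/ alive s x else x <> fst p /\ alive s x).
Proof. unfold alive. rewrite fold_left_app. simpl. unfold alive_step. tauto. Qed.

Lemma alive_finite s : exists l, NoDup l /\ forall x, alive s x <-> In x l.
Proof.
  induction s as [|[v o] s IH] using rev_ind.
  { exists []. split; [constructor|]. intros x. unfold alive; simpl; tauto. }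
  destruct IH as [l [Hn Hl]].
  assert (Hrem : forall x, x <> v -> In x (remove eq_dec_classic v l) <-> In x l)
    by (split; [intros H'; apply in_remove in H'; tauto|now apply in_in_remove]).
  destruct o; [exists (v :: remove eq_dec_classic v l)|exists (remove eq_dec_classic v l)];
    (split; [try constructor; auto using remove_In, NoDup_remove_classic|]);
    intros x; rewrite alive_snoc; simpl; rewrite Hl;
    (destruct (eq_dec_classic x v) as [->|Hxv]; [|rewrite Hrem by auto; intuition congruence]).
  - tauto.
  - split; [intros [[] _]; reflexivity|]. intros H; contradict H; apply remove_In.
Qed.

Definition record_arrival (acc : list X) (p : X * bool) : list X :=
  if snd p then (if in_dec eq_dec_classic (fst p) acc then acc else acc ++ [fst p]) else acc.

Definition arrived s : list X := fold_left record_arrival s [].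

Lemma arrived_snoc s p : arrived (s ++ [p]) = record_arrival (arrived s) p.
Proof. unfold arrived. rewrite fold_left_app. reflexivity. Qed.

Lemma arrived_snoc_extends s p : exists t, arrived (s ++ [p]) = arrived s ++ t.
Proof.
  rewrite arrived_snoc. unfold record_arrival.
  destruct (snd p); [destruct (in_dec eq_dec_classic (fst p) (arrived s))|]; eauto;
    exists []; now rewrite app_nil_r.
Qed.

Lemma NoDup_arrived s : NoDup (arrived s).
Proof.
  induction s as [|p s IH] using rev_ind; [constructor|].
  rewrite arrived_snoc. unfold record_arrival.
  destruct (snd p); auto. destruct (in_dec eq_dec_classic (fst p) (arrived s)); auto.
  apply NoDup_app; auto; [repeat constructor; easy|]. intros a Ha [<-|[]]; auto.
Qed.

Lemma In_arrived s x : In x (arrived s) <-> In (x, true) s.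
Proof.
  induction s as [|[v o] s IH] using rev_ind; [simpl; tauto|].
  rewrite arrived_snoc, in_app_iff. unfold record_arrival. simpl.
  destruct o; [destruct (in_dec eq_dec_classic v (arrived s)) as [Hv|Hv]|].
  - rewrite IH. split; [tauto|]. intros [H|[[= ->]|[]]]; [auto|apply IH, Hv].
  - rewrite in_app_iff, IH. simpl. split; intros [H|[H|[]]]; auto; [subst|injection H as ->]; auto.
  - rewrite IH. split; [tauto|]. intros [H|[[=]|[]]]; auto.
Qed.

Lemma alive_In_arrived s x : alive s x -> In x (arrived s).
Proof.
  intros H. apply In_arrived.
  induction s as [|[v o] s IH] using rev_ind; [unfold alive in H; easy|].
  apply in_or_app. apply alive_snoc in H. destruct o; simpl in H.
  - destruct H as [->|H]; [right; simpl; auto|left; auto].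
  - left; tauto.
Qed.

Lemma arrived_length_le n s : at_most_n_points n s -> (length (arrived s) <= n)%nat.
Proof.
  intros [l [Hl Hin]]. eapply Nat.le_trans; [|apply Hl].
  apply NoDup_incl_length; [apply NoDup_arrived|].
  intros x Hx. apply Hin, In_arrived, Hx.
Qed.

Fixpoint rank (x : X) l : nat :=
  match l with [] => 0%nat | a :: l' => if eq_dec_classic x a then 0%nat else S (rank x l') end.

Lemma rank_app x l t : In x l -> rank x (l ++ t) = rank x l.
Proof.
  induction l as [|a l IH]; simpl; [easy|]. intros [->|H].
  - destruct (eq_dec_classic x x); easy.
  - destruct (eq_dec_classic x a); auto.
Qed.

Lemma rank_lt_length x l : In x l -> (rank x l < length l)%nat.
Proof.
  induction l as [|a l IH]; simpl; [easy|]. intros [->|H].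
  - destruct (eq_dec_classic x x); [lia|easy].
  - destruct (eq_dec_classic x a); [lia|]. specialize (IH H). lia.
Qed.

End ArrivedPoints.

Definition sum_over {X : Type} (g : X -> R) (l : list X) : R :=
  fold_right (fun a acc => g a + acc) 0 l.

Fixpoint sum_upto (f : nat -> R) (N : nat) : R :=
  match N with O => 0 | S k => sum_upto f k + f k end.

Lemma sum_upto_shift f N : sum_upto f (S N) = f 0%nat + sum_upto (fun j => f (S j)) N.
Proof. induction N as [|N IH]; simpl in *; [lra|]. rewrite IH. lra. Qed.

Lemma sum_upto_const a N : sum_upto (fun _ => a) N = INR N * a.
Proof. induction N as [|N IH]; simpl sum_upto; [simpl; lra|]. rewrite IH, S_INR. lra. Qed.

Lemma sum_upto_le_telescope (f F : nat -> R) N :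
  (forall k, f k <= F (S k) - F k) -> sum_upto f N <= F N - F 0%nat.
Proof. intros H. induction N as [|N IH]; simpl; [lra|]. specialize (H N). lra. Qed.

Lemma sum_upto_ge_telescope (f F : nat -> R) N :
  (forall k, F (S k) - F k <= f k) -> F N - F 0%nat <= sum_upto f N.
Proof. intros H. induction N as [|N IH]; simpl; [lra|]. specialize (H N). lra. Qed.

Lemma sum_over_nonneg (X : Type) (g : X -> R) l : (forall a, 0 <= g a) -> 0 <= sum_over g l.
Proof. intros H. induction l as [|a l IH]; simpl; [lra|]. specialize (H a). lra. Qed.

Lemma sum_over_remove (X : Type) (g : X -> R) l x :
  NoDup l -> In x l -> sum_over g l = g x + sum_over g (remove eq_dec_classic x l).
Proof.
  induction l as [|a l IH]; simpl; [easy|]. intros Hn Hx. inversion Hn; subst.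
  destruct (eq_dec_classic x a) as [->|Hne].
  - rewrite notin_remove; auto.
  - destruct Hx as [->|Hx]; [easy|]. simpl. rewrite IH; auto. lra.
Qed.

Lemma sum_over_ext (X : Type) (g h : X -> R) l :
  (forall a, In a l -> g a = h a) -> sum_over g l = sum_over h l.
Proof. induction l as [|a l IH]; simpl; intros H; auto. rewrite H, IH; auto. Qed.

Lemma sum_over_rank (X : Type) (f : nat -> R) (l : list X) :
  NoDup l -> sum_over (fun a => f (rank a l)) l = sum_upto f (length l).
Proof.
  revert f. induction l as [|a l IH]; intros f Hn; [reflexivity|].
  inversion Hn as [|? ? Ha Hl]; subst.
  change (length (a :: l)) with (S (length l)). rewrite sum_upto_shift, <- (IH _ Hl).
  simpl. destruct (eq_dec_classic a a); [|easy]. f_equal.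
  apply sum_over_ext. intros b Hb. destruct (eq_dec_classic b a) as [->|]; easy.
Qed.

Lemma MinRlist_In (l : list R) : l <> [] -> In (MinRlist l) l.
Proof.
  induction l as [|a [|b l] IH]; intros Hne; [easy|left; reflexivity|].
  change (MinRlist (a :: b :: l)) with (Rmin a (MinRlist (b :: l))).
  unfold Rmin. destruct (Rle_dec a (MinRlist (b :: l))); [now left|right; apply IH; easy].
Qed.

Inductive walk {X : Type} (W : list X) (phi : X -> X -> R) (m : R) : X -> X -> Prop :=
| walk_refl x : walk W phi m x x
| walk_step x z y : In z W -> phi x z <= m -> walk W phi m z y -> walk W phi m x y.

Section Walks.
Variable X : Type.
Implicit Types (W : list X) (phi : X -> X -> R).

Lemma walk_weaken W phi m m' x y : m <= m' -> walk W phi m x y -> walk W phi m' x y.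
Proof. intros Hm. induction 1; [constructor|]. apply walk_step with z; auto; lra. Qed.

Lemma walk_trans W phi m x y z : walk W phi m x y -> walk W phi m y z -> walk W phi m x z.
Proof. induction 1; auto. intros. apply walk_step with z0; auto. Qed.

Lemma walk_sym W phi m x y : (forall a b, In a W -> In b W -> phi a b = phi b a) ->
  In x W -> walk W phi m x y -> walk W phi m y x.
Proof.
  intros Hsym Hx H. induction H as [|x z y Hz Hxz _ IH]; [constructor|].
  apply walk_trans with z; auto. apply walk_step with x; [auto|rewrite Hsym; auto|constructor].
Qed.

Lemma walk_incl W W' phi phi' m x y : incl W W' ->
  (forall a b, In a W -> In b W -> phi' a b = phi a b) ->
  In x W -> walk W phi m x y -> walk W' phi' m x y.
Proof.
  intros Hi He Hx H. induction H; [constructor|]. apply walk_step with z; auto.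
  rewrite He; auto.
Qed.

(* Cut the walk after its last visit to x. *)
Lemma walk_last_exit W phi m x a y : walk W phi m a y -> y <> x ->
  (a <> x /\ walk (remove eq_dec_classic x W) phi m a y) \/
  (exists v, In v (remove eq_dec_classic x W) /\ phi x v <= m /\
     walk (remove eq_dec_classic x W) phi m v y).
Proof.
  induction 1 as [a|a z y Hz Hp Hw IH]; intros Hy.
  - left; split; auto. constructor.
  - destruct (IH Hy) as [[Hzx Hw']|[v [Hv [Hpv Hw']]]]; [|right; eauto].
    destruct (eq_dec_classic a x) as [->|Hax].
    + right. exists z. split; auto. apply in_in_remove; auto.
    + left. split; auto. apply walk_step with z; auto. apply in_in_remove; auto.
Qed.

(* Each point other than y pays for the hop leaving it; by [walk_last_exit] every point
   needs to be left only once. *)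
Lemma walk_dist_le (d : X -> X -> R) (Hd : is_metric d) (S : list X) phi (g : X -> R) m :
  (forall a, 0 <= g a) -> (forall a b, In a S -> In b S -> d a b <= phi a b * g a) -> 0 <= m ->
  forall W x y, NoDup W -> incl W S -> In x W -> walk W phi m x y ->
  d x y <= m * sum_over g (remove eq_dec_classic y W).
Proof.
  destruct Hd as [_ [Hd0 [_ Htri]]]. intros Hg Hdom Hm W.
  remember (length W) as n eqn:En. revert W En.
  induction n as [n IH] using (well_founded_induction Wf_nat.lt_wf).
  intros W En x y Hnd Hincl Hx Hw.
  destruct (eq_dec_classic x y) as [->|Hxy].
  { rewrite (proj2 (Hd0 y y) eq_refl).
    pose proof (sum_over_nonneg (remove eq_dec_classic y W) Hg). nra. }
  destruct (walk_last_exit Hw (not_eq_sym Hxy)) as [[Hc _]|[v [Hv [Hxv Hw']]]]; [easy|].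
  assert (HvS : In v S) by (apply in_remove in Hv; apply Hincl; tauto).
  assert (Hdv : d v y <= m * sum_over g (remove eq_dec_classic y (remove eq_dec_classic x W))).
  { eapply IH; [|reflexivity| | |exact Hv|exact Hw'].
    - rewrite En. apply remove_length_lt, Hx.
    - apply NoDup_remove_classic, Hnd.
    - intros a Ha. apply in_remove in Ha. apply Hincl; tauto. }
  assert (Hdx : d x v <= m * g x).
  { eapply Rle_trans; [apply Hdom; auto|]. apply Rmult_le_compat_r; auto. }
  rewrite (@sum_over_remove _ g (remove eq_dec_classic y W) x);
    [|apply NoDup_remove_classic; auto|apply in_in_remove; auto].
  rewrite remove_remove_comm. pose proof (Htri x v y). lra.
Qed.

Definition pair_values W phi : list R :=
  map (fun p => phi (fst p) (snd p)) (list_prod W W).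

Lemma pair_values_In W phi a b : In a W -> In b W -> In (phi a b) (pair_values W phi).
Proof. intros. apply in_map_iff. exists (a, b). split; auto. apply in_prod_iff; auto. Qed.

Lemma pair_values_inv W phi r :
  In r (pair_values W phi) -> exists a b, In a W /\ In b W /\ r = phi a b.
Proof.
  intros H. apply in_map_iff in H as [[a b] [<- H]].
  apply in_prod_iff in H. exists a, b; simpl; tauto.
Qed.

(* Take m' to be the largest hop of the walk. *)
Lemma walk_level_in_pair_values W phi m x y : In x W -> walk W phi m x y -> x <> y ->
  exists m', In m' (pair_values W phi) /\ m' <= m /\ walk W phi m' x y.
Proof.
  intros Hx H. induction H as [x|x z y Hz Hp Hw IH]; [easy|]. intros Hxy.
  destruct (eq_dec_classic z y) as [->|Hzy].
  { exists (phi x y). split; [apply pair_values_In; auto|]. split; auto.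
    apply walk_step with y; auto; [lra|constructor]. }
  destruct (IH Hz Hzy) as [m1 [Hm1 [Hm1le Hw1]]].
  exists (Rmax (phi x z) m1). split; [|split].
  - unfold Rmax. destruct (Rle_dec (phi x z) m1); auto. apply pair_values_In; auto.
  - apply Rmax_lub; auto.
  - apply walk_step with z; auto; [apply Rmax_l|]. eapply walk_weaken; [apply Rmax_r|auto].
Qed.

(* The subdominant ultrametric of phi on W: the least level at which a walk joins x and
   y.  Meaningful for x, y in W only. *)
Definition minimax W phi (x y : X) : R :=
  if eq_dec_classic x y then 0
  else MinRlist (filter (fun r => if excluded_middle_informative (walk W phi r x y)
                                  then true else false)
                        (pair_values W phi)).

Lemma minimax_spec W phi x y : In x W -> In y W -> x <> y ->
  walk W phi (minimax W phi x y) x y /\ In (minimax W phi x y) (pair_values W phi) /\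
  forall r, walk W phi r x y -> minimax W phi x y <= r.
Proof.
  intros Hx Hy Hxy. unfold minimax. destruct (eq_dec_classic x y) as [|_]; [easy|].
  set (P := fun r => if excluded_middle_informative (walk W phi r x y) then true else false).
  assert (HP : forall r, In r (filter P (pair_values W phi)) <->
                         In r (pair_values W phi) /\ walk W phi r x y).
  { intros r. rewrite filter_In. unfold P.
    destruct (excluded_middle_informative (walk W phi r x y)); intuition easy. }
  assert (Hin : In (MinRlist (filter P (pair_values W phi))) (filter P (pair_values W phi))).
  { apply MinRlist_In. intros E.
    assert (Hone : In (phi x y) (filter P (pair_values W phi))).
    { apply HP. split; [apply pair_values_In; auto|].
      apply walk_step with y; [auto|lra|constructor]. }
    rewrite E in Hone. easy. }
  apply HP in Hin as [Hin Hwalk]. split; [|split]; auto.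
  intros r Hr. destruct (walk_level_in_pair_values Hx Hr Hxy) as [r' [Hr' [Hle Hw]]].
  eapply Rle_trans; [apply MinRlist_P1, HP; split; eauto|exact Hle].
Qed.

Lemma minimax_diag W phi x : minimax W phi x x = 0.
Proof. unfold minimax. destruct (eq_dec_classic x x); easy. Qed.

Lemma minimax_le W phi x y : In x W -> In y W -> x <> y -> minimax W phi x y <= phi x y.
Proof.
  intros Hx Hy Hxy. apply (minimax_spec phi Hx Hy Hxy).
  apply walk_step with y; [auto|lra|constructor].
Qed.

Lemma minimax_incl W W' phi phi' x y : incl W W' ->
  (forall a b, In a W -> In b W -> phi' a b = phi a b) -> In x W -> In y W ->
  minimax W' phi' x y <= minimax W phi x y.
Proof.
  intros Hi He Hx Hy. destruct (eq_dec_classic x y) as [->|Hxy]; [rewrite !minimax_diag; lra|].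
  apply (minimax_spec phi' (Hi x Hx) (Hi y Hy) Hxy).
  eapply walk_incl; eauto. apply (minimax_spec phi Hx Hy Hxy).
Qed.

Section Ultrametric.
Variable W : list X.
Variable phi : X -> X -> R.
Hypothesis phi_nonneg : forall a b, In a W -> In b W -> 0 <= phi a b.
Hypothesis phi_sym : forall a b, In a W -> In b W -> phi a b = phi b a.

Lemma minimax_nonneg x y : In x W -> In y W -> 0 <= minimax W phi x y.
Proof.
  intros Hx Hy. destruct (eq_dec_classic x y) as [->|Hxy]; [rewrite minimax_diag; lra|].
  destruct (minimax_spec phi Hx Hy Hxy) as [_ [Hv _]].
  apply pair_values_inv in Hv as [a [b [Ha [Hb ->]]]]. auto.
Qed.

Lemma minimax_sym x y : In x W -> In y W -> minimax W phi x y = minimax W phi y x.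
Proof.
  intros Hx Hy. destruct (eq_dec_classic x y) as [->|Hxy]; auto.
  destruct (minimax_spec phi Hx Hy Hxy) as [Hw1 [_ Hmin1]].
  destruct (minimax_spec phi Hy Hx (not_eq_sym Hxy)) as [Hw2 [_ Hmin2]].
  apply Rle_antisym; [apply Hmin1|apply Hmin2]; apply walk_sym; auto.
Qed.

Lemma minimax_ultra x y z : In x W -> In y W -> In z W ->
  minimax W phi x z <= Rmax (minimax W phi x y) (minimax W phi y z).
Proof.
  intros Hx Hy Hz.
  destruct (eq_dec_classic x z) as [->|Hxz].
  { rewrite minimax_diag. pose proof (minimax_nonneg Hz Hy).
    pose proof (Rmax_l (minimax W phi z y) (minimax W phi y z)). lra. }
  destruct (eq_dec_classic x y) as [->|Hxy]; [rewrite minimax_diag; apply Rmax_r|].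
  destruct (eq_dec_classic y z) as [->|Hyz]; [rewrite minimax_diag; apply Rmax_l|].
  apply (minimax_spec phi Hx Hz Hxz). apply walk_trans with y.
  - eapply walk_weaken; [apply Rmax_l|apply (minimax_spec phi Hx Hy Hxy)].
  - eapply walk_weaken; [apply Rmax_r|apply (minimax_spec phi Hy Hz Hyz)].
Qed.

End Ultrametric.
End Walks.

Lemma two_le_length (X : Type) (l : list X) x y :
  In x l -> In y l -> x <> y -> (2 <= length l)%nat.
Proof.
  intros Hx Hy Hxy. pose proof (remove_length_lt eq_dec_classic l x Hx) as Hlt.
  assert (Hy' : In y (remove eq_dec_classic x l)) by (apply in_in_remove; auto).
  destruct (remove eq_dec_classic x l); simpl in *; [easy|lia].
Qed.

Section RankStretchEmbedding.
Variable X : Type.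
Variable d : X -> X -> R.
Hypothesis d_metric : is_metric d.
Variable c : nat -> R.
Hypothesis c_pos : forall j, 0 < c j.
Hypothesis c_mono : forall i j, (i <= j)%nat -> c i <= c j.

Definition stretch (s : update_seq X) (a b : X) : R :=
  c (Nat.max (rank a (arrived s)) (rank b (arrived s))) * d a b.

Definition stretch_embedding : online_embedding X :=
  fun s => minimax (arrived s) (stretch s).

(* Only k - 1 of the k arrived points pay along a walk: its endpoint does not. *)
Definition inverse_stretch_sum (s : update_seq X) : R :=
  sum_upto (fun j => / c j) (length (arrived s) - 1).

Lemma d_nonneg x y : 0 <= d x y.
Proof. apply d_metric. Qed.

Lemma d_diag x : d x x = 0.
Proof. apply d_metric. reflexivity. Qed.

Lemma stretch_nonneg s a b : 0 <= stretch s a b.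
Proof. apply Rmult_le_pos; [apply Rlt_le, c_pos|apply d_nonneg]. Qed.

Lemma stretch_sym s a b : stretch s a b = stretch s b a.
Proof. unfold stretch. rewrite Nat.max_comm. f_equal. apply d_metric. Qed.

Lemma stretch_snoc s p a b : In a (arrived s) -> In b (arrived s) ->
  stretch (s ++ [p]) a b = stretch s a b.
Proof.
  intros Ha Hb. unfold stretch. destruct (arrived_snoc_extends s p) as [t ->].
  rewrite !rank_app; auto.
Qed.

Lemma d_le_stretch s a b : d a b <= stretch s a b * / c (rank a (arrived s)).
Proof.
  unfold stretch. set (ra := rank a (arrived s)).
  assert (Hc : c ra <= c (Nat.max ra (rank b (arrived s)))) by (apply c_mono; lia).
  pose proof (c_pos ra). pose proof (d_nonneg a b).
  apply Rmult_le_reg_r with (c ra); auto.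
  rewrite Rmult_assoc, Rinv_l by lra. nra.
Qed.

(* The removed point has rank at most k - 1, hence weight at least 1/c_(k-1). *)
Lemma sum_inv_rank_remove s y : In y (arrived s) ->
  sum_over (fun a => / c (rank a (arrived s))) (remove eq_dec_classic y (arrived s))
  <= inverse_stretch_sum s.
Proof.
  intros Hy. unfold inverse_stretch_sum.
  set (k := length (arrived s)).
  assert (Hk : (rank y (arrived s) <= k - 1)%nat)
    by (pose proof (rank_lt_length Hy); unfold k; lia).
  assert (Hall : sum_over (fun a => / c (rank a (arrived s))) (arrived s)
                 = sum_upto (fun j => / c j) (k - 1) + / c (k - 1)%nat).
  { rewrite (sum_over_rank (fun j => / c j) (NoDup_arrived s)). fold k.
    replace k with (S (k - 1)) at 1 by (pose proof (rank_lt_length Hy); unfold k in *; lia).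
    reflexivity. }
  rewrite (sum_over_remove _ (NoDup_arrived s) Hy) in Hall.
  assert (/ c (k - 1)%nat <= / c (rank y (arrived s))) by (apply Rinv_le_contravar; auto).
  lra.
Qed.

Lemma stretch_embedding_noncontractive s x y : inverse_stretch_sum s <= 1 ->
  In x (arrived s) -> In y (arrived s) -> d x y <= stretch_embedding s x y.
Proof.
  intros Hsum Hx Hy. unfold stretch_embedding.
  destruct (eq_dec_classic x y) as [->|Hxy]; [rewrite minimax_diag, d_diag; lra|].
  set (m := minimax (arrived s) (stretch s) x y).
  assert (Hm : 0 <= m) by (apply minimax_nonneg; auto using stretch_nonneg).
  assert (Hg : forall a, 0 <= / c (rank a (arrived s)))
    by (intros; apply Rlt_le, Rinv_0_lt_compat, c_pos).
  pose proof (proj1 (minimax_spec (stretch s) Hx Hy Hxy)) as Hwalk. fold m in Hwalk.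
  pose proof (walk_dist_le d_metric Hg (fun a b _ _ => d_le_stretch s a b) Hm
                (NoDup_arrived s) (incl_refl _) Hx Hwalk).
  pose proof (sum_inv_rank_remove Hy). nra.
Qed.

Lemma stretch_embedding_in_HSTs s : inverse_stretch_sum s <= 1 ->
  in_HSTs (alive s) (stretch_embedding s).
Proof.
  intros Hsum. destruct (alive_finite s) as [l [Hnd Hl]].
  eapply ultrametric_in_HSTs; [| | | |exact Hnd|exact Hl]; unfold stretch_embedding;
    intros; repeat match goal with H : alive s _ |- _ => apply alive_In_arrived in H end.
  - apply minimax_diag.
  - apply Rlt_le_trans with (d x y); [|apply stretch_embedding_noncontractive; auto].
    destruct (d_nonneg x y) as [|Hd0]; auto. symmetry in Hd0. apply d_metric in Hd0. easy.
  - apply minimax_sym; auto using stretch_sym.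
  - apply minimax_ultra; auto using stretch_nonneg.
Qed.

Lemma stretch_embedding_snoc_le s p u v : In u (arrived s) -> In v (arrived s) ->
  stretch_embedding (s ++ [p]) u v <= stretch_embedding s u v.
Proof.
  intros Hu Hv. apply minimax_incl; auto.
  - destruct (arrived_snoc_extends s p) as [t ->]. apply incl_appl, incl_refl.
  - intros. apply stretch_snoc; auto.
Qed.

Theorem stretch_embedding_monotone (C : update_seq X -> Prop) :
  (forall s, C s -> inverse_stretch_sum s <= 1) -> monotone_HST_embedding d C stretch_embedding.
Proof.
  intros Hsum s p Hs. cbv zeta. split; [|split].
  - apply stretch_embedding_in_HSTs; auto.
  - intros u v Hu Hv. apply stretch_embedding_noncontractive; auto using alive_In_arrived.
  - intros u v Hu Hv _ _. apply stretch_embedding_snoc_le; auto using alive_In_arrived.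
Qed.

Theorem stretch_embedding_distortion (C : update_seq X -> Prop) lam :
  (forall s, C s -> (2 <= length (arrived s))%nat -> c (length (arrived s) - 1) <= lam) ->
  has_distortion d C stretch_embedding lam.
Proof.
  intros Hc s Hs u v Hu Hv. apply alive_In_arrived in Hu, Hv. unfold stretch_embedding.
  destruct (eq_dec_classic u v) as [->|Huv]; [rewrite minimax_diag, d_diag; lra|].
  eapply Rle_trans; [apply minimax_le; auto|]. unfold stretch.
  apply Rmult_le_compat_r; [apply d_nonneg|].
  eapply Rle_trans; [apply c_mono|apply Hc; eauto using two_le_length].
  pose proof (rank_lt_length Hu). pose proof (rank_lt_length Hv). lia.
Qed.

End RankStretchEmbedding.

Definition arrivals {X : Type} (p : nat -> X) (t : nat) : update_seq X :=
  map (fun i => (p i, true)) (seq 0 t).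

Section Arrivals.
Variable X : Type.
Variable p : nat -> X.

Lemma arrivals_S t : arrivals p (S t) = arrivals p t ++ [(p t, true)].
Proof. unfold arrivals. rewrite seq_S, map_app. reflexivity. Qed.

Lemma alive_arrivals t x : alive (arrivals p t) x <-> exists i, (i < t)%nat /\ x = p i.
Proof.
  induction t as [|t IH].
  { unfold arrivals, alive; simpl. split; [easy|]. intros [i [Hi _]]; lia. }
  rewrite arrivals_S, alive_snoc. simpl. rewrite IH. split.
  - intros [->|[i [Hi ->]]]; [exists t|exists i]; split; auto.
  - intros [i [Hi ->]]. destruct (Nat.eq_dec i t) as [->|Hne]; [now left|].
    right. exists i; split; auto. lia.
Qed.

Lemma alive_arrivals_lt t i : (i < t)%nat -> alive (arrivals p t) (p i).
Proof. intros Hi. apply alive_arrivals. eauto. Qed.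

Lemma arrivals_at_most_n_points t n : (t <= n)%nat -> at_most_n_points n (arrivals p t).
Proof.
  intros Ht. exists (map p (seq 0 t)). split; [now rewrite length_map, length_seq|].
  intros x Hx. apply in_map_iff in Hx as [i [[= <-] Hi]]. apply in_map, Hi.
Qed.

Lemma embedding_arrivals_antitone d C (E : online_embedding X) M t t' i j :
  monotone_HST_embedding d C E -> (forall t, (t <= M)%nat -> C (arrivals p t)) ->
  (t <= t' <= M)%nat -> (i < t)%nat -> (j < t)%nat ->
  E (arrivals p t') (p i) (p j) <= E (arrivals p t) (p i) (p j).
Proof.
  intros Hmono HC Ht Hi Hj. induction t' as [|t' IH]; [lia|].
  destruct (Nat.eq_dec t (S t')) as [->|Hne]; [lra|].
  eapply Rle_trans; [|apply IH; lia].
  destruct (Hmono (arrivals p t') (p t', true)) as [_ [_ Hanti]];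
    [rewrite <- arrivals_S; apply HC; lia|].
  rewrite arrivals_S. apply Hanti; try rewrite <- arrivals_S; apply alive_arrivals_lt; lia.
Qed.

End Arrivals.

Lemma in_HSTs_chain_le (X : Type) (L : X -> Prop) dt (q : nat -> X) B m :
  in_HSTs L dt -> (forall i, (i <= m)%nat -> L (q i)) ->
  (forall i, (i < m)%nat -> dt (q i) (q (S i)) <= B) -> 0 <= B -> dt (q 0%nat) (q m) <= B.
Proof.
  intros HT. induction m as [|m IH]; intros HL Hstep HB.
  { rewrite (in_HSTs_diag HT); auto. }
  eapply Rle_trans; [apply (in_HSTs_ultra (y := q m) HT); apply HL; lia|].
  apply Rmax_lub; auto.
Qed.

Lemma arrivals_lower_bound (X : Type) d C (E : online_embedding X) (p : nat -> X) M N B :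
  monotone_HST_embedding d C E -> (forall t, (t <= M)%nat -> C (arrivals p t)) ->
  (N < M)%nat -> 0 <= B ->
  (forall i, (i < N)%nat ->
     exists t, (S i < t <= M)%nat /\ E (arrivals p t) (p i) (p (S i)) <= B) ->
  d (p 0%nat) (p N) <= B.
Proof.
  intros Hmono HC HNM HB Hgap. destruct M as [|M]; [lia|].
  destruct (Hmono (arrivals p M) (p M, true)) as [HT [Hnc _]];
    [rewrite <- arrivals_S; apply HC; lia|].
  rewrite <- arrivals_S in HT, Hnc.
  eapply Rle_trans; [apply Hnc; apply alive_arrivals_lt; lia|].
  apply (in_HSTs_chain_le HT); auto.
  - intros i Hi. apply alive_arrivals_lt. lia.
  - intros i Hi. destruct (Hgap i Hi) as [t [Ht HEt]].
    eapply Rle_trans; [|exact HEt]. apply (embedding_arrivals_antitone Hmono HC); lia.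
Qed.

Lemma is_metric_Rdist : is_metric Rdist.
Proof.
  split; [|split; [|split]].
  - intros x y. apply Rge_le, Rdist_pos.
  - apply Rdist_refl.
  - apply Rdist_sym.
  - intros x y z. apply Rdist_tri.
Qed.

Lemma INR_pred_le_Rmax k n : (k <= n)%nat -> INR (k - 1) <= Rmax 1 (INR n - 1).
Proof.
  intros Hk. destruct k as [|k].
  - eapply Rle_trans; [|apply Rmax_l]. simpl. lra.
  - replace (S k - 1)%nat with k by lia. apply le_INR in Hk. rewrite S_INR in Hk.
    rewrite <- Rmax_r. lra.
Qed.

Theorem known_n_upper_bound (n : nat) (X : Type) (d : X -> X -> R) : is_metric d ->
  exists E : online_embedding X,
    monotone_HST_embedding d (at_most_n_points n) E /\
    has_distortion d (at_most_n_points n) E (INR n - 1).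
Proof.
  intros Hd. set (cn := Rmax 1 (INR n - 1)).
  assert (Hcn : 1 <= cn) by apply Rmax_l.
  exists (stretch_embedding d (fun _ => cn)). split.
  - apply stretch_embedding_monotone; auto; [intros; lra..|]. intros s Hs.
    unfold inverse_stretch_sum. rewrite sum_upto_const.
    pose proof (INR_pred_le_Rmax (arrived_length_le Hs)) as Hk. fold cn in Hk.
    apply Rmult_le_reg_r with cn; [lra|]. rewrite Rmult_assoc, Rinv_l; lra.
  - apply stretch_embedding_distortion; auto; [intros; lra..|]. intros s Hs H2.
    pose proof (arrived_length_le Hs).
    assert (Hn : 2 <= INR n) by (change 2 with (INR 2); apply le_INR; lia).
    unfold cn. rewrite Rmax_right; lra.
Qed.

Lemma Rdist_INR i j : (i <= j)%nat -> Rdist (INR i) (INR j) = INR (j - i).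
Proof.
  intros Hij. unfold Rdist. rewrite Rabs_minus_sym, minus_INR by auto.
  apply Rabs_right. apply le_INR in Hij. lra.
Qed.

Theorem known_n_lower_bound (n : nat) : (2 <= n)%nat ->
  exists (X : Type) (d : X -> X -> R), is_metric d /\
    forall (E : online_embedding X) (lam : R),
      monotone_HST_embedding d (at_most_n_points n) E ->
      has_distortion d (at_most_n_points n) E lam -> INR n - 1 <= lam.
Proof.
  intros Hn. exists R, Rdist. split; [apply is_metric_Rdist|]. intros E lam Hmono Hdist.
  assert (Hunit : forall i, Rdist (INR i) (INR (S i)) = 1)
    by (intros i; rewrite Rdist_INR by lia; now replace (S i - i)%nat with 1%nat by lia).
  assert (Hline : Rdist (INR 0) (INR (n - 1)) <= Rmax lam 0).
  { apply (arrivals_lower_bound (M := n) Hmono); [|lia|apply Rmax_r|].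
    - intros t Ht. apply arrivals_at_most_n_points, Ht.
    - intros i Hi. exists n. split; [lia|]. eapply Rle_trans.
      + apply Hdist; [apply arrivals_at_most_n_points|apply alive_arrivals_lt..]; lia.
      + rewrite Hunit, Rmult_1_r. apply Rmax_l. }
  rewrite Rdist_INR, Nat.sub_0_r, minus_INR in Hline by lia. simpl INR in Hline.
  assert (Hn' : 2 <= INR n) by (change 2 with (INR 2); apply le_INR; lia).
  unfold Rmax in Hline. destruct (Rle_dec lam 0); lra.
Qed.

Lemma ln_le_minus_1 x : 0 < x -> ln x <= x - 1.
Proof.
  intros Hx. destruct (Req_dec (ln x) 0) as [H|H].
  - assert (x = 1) by (rewrite <- (exp_ln x Hx), H, exp_0; auto). lra.
  - pose proof (exp_ineq1 _ H). rewrite exp_ln in *; auto. lra.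
Qed.

Lemma ln_le x y : 0 < x -> x <= y -> ln x <= ln y.
Proof.
  intros Hx Hxy. destruct (Req_dec x y) as [->|Hne]; [lra|].
  apply Rlt_le, ln_increasing; lra.
Qed.

Lemma ln_gt_0 x : 1 < x -> 0 < ln x.
Proof. intros. rewrite <- ln_1. apply ln_increasing; lra. Qed.

Lemma ln_sub x y : 0 < x -> 0 < y -> ln y - ln x = ln (y / x).
Proof.
  intros Hx Hy. unfold Rdiv. rewrite ln_mult, ln_Rinv; auto. apply Rinv_0_lt_compat, Hx.
Qed.

Lemma ln_sub_le a b : 0 < a -> a <= b -> ln b - ln a <= (b - a) / a.
Proof.
  intros Ha Hab. rewrite ln_sub by lra.
  eapply Rle_trans; [apply ln_le_minus_1; apply Rdiv_lt_0_compat; lra|].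
  right. field. lra.
Qed.

Lemma ln_sub_ge a b : 0 < a -> a <= b -> (b - a) / b <= ln b - ln a.
Proof.
  intros Ha Hab. assert (E : ln b - ln a = - (ln a - ln b)) by ring.
  rewrite E, ln_sub by lra.
  assert (ln (a / b) <= a / b - 1) by (apply ln_le_minus_1, Rdiv_lt_0_compat; lra).
  assert ((b - a) / b = 1 - a / b) by (field; lra). lra.
Qed.

Lemma lnln_increment_le x : 1 < x -> ln (ln (x + 1)) - ln (ln x) <= / (x * ln x).
Proof.
  intros Hx. assert (Ha : 0 < ln x) by (apply ln_gt_0; lra).
  assert (Hab : ln x <= ln (x + 1)) by (apply ln_le; lra).
  assert (Hb : ln (x + 1) - ln x <= / x)
    by (eapply Rle_trans; [apply ln_sub_le; lra|right; field; lra]).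
  eapply Rle_trans; [apply ln_sub_le; auto|].
  rewrite Rinv_mult. unfold Rdiv. apply Rmult_le_compat_r; [apply Rlt_le, Rinv_0_lt_compat|]; auto.
Qed.

Lemma lnln_increment_ge x : 1 < x -> / ((x + 1) * ln (x + 1)) <= ln (ln (x + 1)) - ln (ln x).
Proof.
  intros Hx. assert (Ha : 0 < ln x) by (apply ln_gt_0; lra).
  assert (Hab : ln x <= ln (x + 1)) by (apply ln_le; lra).
  assert (Hb : / (x + 1) <= ln (x + 1) - ln x).
  { eapply Rle_trans; [|apply ln_sub_ge; lra]. right. field. lra. }
  eapply Rle_trans; [|apply ln_sub_ge; auto].
  rewrite Rinv_mult. unfold Rdiv.
  apply Rmult_le_compat_r; [apply Rlt_le, Rinv_0_lt_compat; lra|auto].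
Qed.

(* The gap between p_i and p_(i+1) is 1/(T ln T) for the time T = i + N0 + 2 at which
   their distance is measured. *)
Definition gap (N0 i : nat) : R := / (INR (i + N0 + 2) * ln (INR (i + N0 + 2))).

Definition gap_point (N0 : nat) : nat -> R := sum_upto (gap N0).

Lemma INR_add_2_gt_1 k : 1 < INR (k + 2).
Proof. rewrite plus_INR. pose proof (pos_INR k). simpl. lra. Qed.

Lemma gap_pos N0 i : 0 < gap N0 i.
Proof.
  pose proof (INR_add_2_gt_1 (i + N0)). unfold gap.
  apply Rinv_0_lt_compat, Rmult_lt_0_compat; [lra|apply ln_gt_0; auto].
Qed.

Lemma gap_point_ge N0 N :
  ln (ln (INR (N + N0 + 2))) - ln (ln (INR (N0 + 2))) <= gap_point N0 N.
Proof.
  apply (sum_upto_ge_telescope (F := fun k => ln (ln (INR (k + N0 + 2))))).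
  intros k. replace (S k + N0 + 2)%nat with (S (k + N0 + 2)) by lia. rewrite S_INR.
  apply lnln_increment_le, INR_add_2_gt_1.
Qed.

Lemma gap_point_unbounded N0 : exists N, 1 < gap_point N0 N.
Proof.
  set (L0 := ln (ln (INR (N0 + 2)))).
  destruct (INR_unbounded (exp (exp (1 + L0)))) as [N HN].
  exists N. eapply Rlt_le_trans; [|apply gap_point_ge]. fold L0.
  assert (Hle : INR N <= INR (N + N0 + 2)) by (apply le_INR; lia).
  assert (1 + L0 < ln (ln (INR (N + N0 + 2)))); [|lra].
  rewrite <- (ln_exp (1 + L0)). apply ln_increasing; [apply exp_pos|].
  rewrite <- (ln_exp (exp (1 + L0))). apply ln_increasing; [apply exp_pos|lra].
Qed.

Lemma Rdist_gap_point N0 i : Rdist (gap_point N0 i) (gap_point N0 (S i)) = gap N0 i.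
Proof.
  unfold Rdist, gap_point. simpl sum_upto. pose proof (gap_pos N0 i).
  replace (sum_upto (gap N0) i - (sum_upto (gap N0) i + gap N0 i)) with (- gap N0 i) by ring.
  rewrite Rabs_Ropp. apply Rabs_right. lra.
Qed.

Theorem no_embedding_with_distortion_nlogn (E : online_embedding R) N0 :
  monotone_HST_embedding Rdist (fun _ => True) E ->
  ~ (forall n, (N0 <= n)%nat -> has_distortion Rdist (at_most_n_points n) E (INR n * ln (INR n))).
Proof.
  intros Hmono Hdist. destruct (gap_point_unbounded N0) as [N HN].
  assert (Hline : Rdist (gap_point N0 0) (gap_point N0 N) <= 1).
  { apply (arrivals_lower_bound (M := N + N0 + 1) Hmono); auto; [lia|lra|].
    intros i Hi. set (t := (i + N0 + 2)%nat). exists t. split; [unfold t; lia|].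
    eapply Rle_trans.
    - apply (Hdist t); [unfold t; lia|apply arrivals_at_most_n_points; lia|..];
        apply alive_arrivals_lt; unfold t; lia.
    - rewrite Rdist_gap_point. unfold gap, t. pose proof (INR_add_2_gt_1 (i + N0)) as Ht.
      pose proof (ln_gt_0 Ht). right. field. split; lra. }
  unfold Rdist in Hline. change (gap_point N0 0) with 0 in Hline.
  rewrite Rminus_0_l, Rabs_Ropp, Rabs_right in Hline; lra.
Qed.

Definition ee : R := exp (exp 1).

Definition loglog_rate (x : R) : R := x * ln x * ln (ln x) ^ 2.

Definition rate_coeff (j : nat) : R := loglog_rate (INR j + 1 + ee).

Lemma exp_1_ge_2 : 2 <= exp 1.
Proof. pose proof (exp_ineq1_le 1). lra. Qed.

Lemma ee_gt_1 : 1 < ee.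
Proof. pose proof (exp_ineq1_le (exp 1)). pose proof exp_1_ge_2. unfold ee. lra. Qed.

Lemma ee_le_27 : ee <= 27.
Proof.
  unfold ee. apply Rle_trans with (exp 3).
  - destruct (Req_dec (exp 1) 3) as [->|Hne]; [lra|].
    apply Rlt_le, exp_increasing. pose proof exp_le_3. lra.
  - replace 3 with (1 + 1 + 1) by ring. rewrite !exp_plus.
    pose proof exp_le_3. pose proof (exp_pos 1). assert (exp 1 * exp 1 <= 9) by nra. nra.
Qed.

Lemma ln_ge_exp_1 x : ee <= x -> exp 1 <= ln x.
Proof. intros H. rewrite <- (ln_exp (exp 1)). apply ln_le; auto. apply exp_pos. Qed.

Lemma lnln_ge_1 x : ee <= x -> 1 <= ln (ln x).
Proof.
  intros H. rewrite <- (ln_exp 1). apply ln_le; [apply exp_pos|]. apply ln_ge_exp_1, H.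
Qed.

Lemma lnln_ee : ln (ln ee) = 1.
Proof. unfold ee. rewrite !ln_exp. reflexivity. Qed.

Lemma loglog_rate_pos x : ee <= x -> 0 < loglog_rate x.
Proof.
  intros H. pose proof (ln_ge_exp_1 H). pose proof exp_1_ge_2. pose proof (lnln_ge_1 H).
  pose proof ee_gt_1.
  unfold loglog_rate. apply Rmult_lt_0_compat; [apply Rmult_lt_0_compat; lra|]. apply pow_lt. lra.
Qed.

Lemma loglog_rate_le x y : ee <= x -> x <= y -> loglog_rate x <= loglog_rate y.
Proof.
  intros Hx Hxy. pose proof exp_1_ge_2. pose proof ee_gt_1.
  pose proof (ln_ge_exp_1 Hx). pose proof (lnln_ge_1 Hx).
  assert (ln x <= ln y) by (apply ln_le; lra).
  assert (ln (ln x) <= ln (ln y)) by (apply ln_le; lra).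
  unfold loglog_rate. apply Rmult_le_compat; [nra|apply pow_le; lra|apply Rmult_le_compat; lra|].
  apply pow_incr. lra.
Qed.

Lemma loglog_rate_shift_le x : ee <= x -> loglog_rate (x + ee) <= 16 * loglog_rate x.
Proof.
  intros Hx. pose proof exp_1_ge_2. pose proof ee_gt_1.
  pose proof (ln_ge_exp_1 Hx) as Hlx. pose proof (lnln_ge_1 Hx) as HLx.
  assert (Hln2 : ln 2 <= 1) by (pose proof (ln_le_minus_1 (x := 2) ltac:(lra)); lra).
  assert (H2x : ee <= 2 * x) by lra.
  assert (Hl2x : ln (2 * x) <= 2 * ln x) by (rewrite ln_mult by lra; lra).
  assert (HL2x : ln (ln (2 * x)) <= 2 * ln (ln x)).
  { eapply Rle_trans; [apply ln_le with (y := 2 * ln x); [pose proof (ln_ge_exp_1 H2x); lra|auto]|].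
    rewrite ln_mult by lra. lra. }
  eapply Rle_trans; [apply (loglog_rate_le (y := 2 * x)); lra|].
  pose proof (lnln_ge_1 H2x). pose proof (ln_ge_exp_1 H2x).
  replace (16 * loglog_rate x) with (2 * x * (2 * ln x) * (2 * ln (ln x)) ^ 2)
    by (unfold loglog_rate; ring).
  unfold loglog_rate. apply Rmult_le_compat; [nra|apply pow_le; lra|apply Rmult_le_compat; lra|].
  apply pow_incr. lra.
Qed.

(* 1/(x ln x (ln ln x)^2) is the derivative of -1/ln ln x, up to the shift by one. *)
Lemma inv_loglog_rate_le x : ee <= x ->
  / loglog_rate (x + 1) <= / ln (ln x) - / ln (ln (x + 1)).
Proof.
  intros Hx. pose proof exp_1_ge_2. pose proof ee_gt_1.
  assert (Hx1 : ee <= x + 1) by lra.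
  pose proof (ln_ge_exp_1 Hx1). pose proof (lnln_ge_1 Hx) as Ha. pose proof (lnln_ge_1 Hx1) as Hb.
  assert (Hq : / ((x + 1) * ln (x + 1)) <= ln (ln (x + 1)) - ln (ln x))
    by (apply lnln_increment_ge; lra).
  set (a := ln (ln x)) in *. set (b := ln (ln (x + 1))) in *.
  set (q := / ((x + 1) * ln (x + 1))) in *.
  assert (Hqpos : 0 < q) by (apply Rinv_0_lt_compat, Rmult_lt_0_compat; lra).
  assert (E1 : / loglog_rate (x + 1) = q / (b * b)) by (unfold loglog_rate, q; fold b; field; lra).
  assert (E2 : / a - / b = (b - a) / (a * b)) by (field; lra).
  rewrite E1, E2. unfold Rdiv.
  apply Rmult_le_compat; [lra|apply Rlt_le, Rinv_0_lt_compat; nra|lra|].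
  apply Rinv_le_contravar; nra.
Qed.

Lemma rate_coeff_pos j : 0 < rate_coeff j.
Proof. apply loglog_rate_pos. pose proof (pos_INR j). lra. Qed.

Lemma rate_coeff_le i j : (i <= j)%nat -> rate_coeff i <= rate_coeff j.
Proof.
  intros H. apply le_INR in H. pose proof (pos_INR i). apply loglog_rate_le; lra.
Qed.

Lemma sum_inv_rate_coeff_le_1 N : sum_upto (fun j => / rate_coeff j) N <= 1.
Proof.
  set (F := fun k : nat => - / ln (ln (INR k + ee))).
  assert (Htele : sum_upto (fun j => / rate_coeff j) N <= F N - F 0%nat).
  { apply sum_upto_le_telescope. intros k. unfold F, rate_coeff. rewrite S_INR.
    replace (INR k + 1 + ee) with (INR k + ee + 1) by ring.
    pose proof (pos_INR k). pose proof (inv_loglog_rate_le (x := INR k + ee) ltac:(lra)). lra. }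
  unfold F in Htele. change (INR 0) with 0 in Htele.
  rewrite Rplus_0_l, lnln_ee, Rinv_1 in Htele.
  assert (HN : ee <= INR N + ee) by (pose proof (pos_INR N); lra).
  pose proof (lnln_ge_1 HN). assert (0 < / ln (ln (INR N + ee))) by (apply Rinv_0_lt_compat; lra).
  lra.
Qed.

Lemma rate_coeff_pred_le n : 27 <= INR n -> rate_coeff (n - 1) <= 16 * loglog_rate (INR n).
Proof.
  intros Hn. pose proof ee_le_27.
  assert (H1 : (1 <= n)%nat) by (apply INR_le; simpl; lra).
  unfold rate_coeff. rewrite minus_INR by exact H1. simpl INR.
  replace (INR n - 1 + 1 + ee) with (INR n + ee) by ring.
  apply loglog_rate_shift_le. lra.
Qed.

Theorem unknown_n_upper_bound : exists (C : R) (k : nat) (N0 : nat), 0 < C /\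
  forall (X : Type) (d : X -> X -> R), is_metric d ->
    exists E : online_embedding X,
      monotone_HST_embedding d (fun _ => True) E /\
      forall n : nat, (N0 <= n)%nat ->
        has_distortion d (at_most_n_points n) E
          (C * INR n * ln (INR n) * (ln (ln (INR n))) ^ k).
Proof.
  exists 16, 2%nat, 27%nat. split; [lra|]. intros X d Hd.
  exists (stretch_embedding d rate_coeff). split.
  - apply stretch_embedding_monotone; auto using rate_coeff_pos, rate_coeff_le.
    intros s _. apply sum_inv_rate_coeff_le_1.
  - intros n Hn. apply stretch_embedding_distortion; auto using rate_coeff_pos, rate_coeff_le.
    intros s Hs _. pose proof (arrived_length_le Hs).
    assert (H27 : 27 <= INR n) by (apply le_INR in Hn; simpl in Hn; lra).
    eapply Rle_trans; [apply rate_coeff_le with (j := (n - 1)%nat); lia|].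
    eapply Rle_trans; [apply rate_coeff_pred_le, H27|]. unfold loglog_rate. lra.
Qed.

Theorem unknown_n_lower_bound : exists (c : R) (k : nat), 0 < c /\
  exists (X : Type) (d : X -> X -> R), is_metric d /\
    forall E : online_embedding X,
      monotone_HST_embedding d (fun _ => True) E ->
      forall N0 : nat, exists n : nat, (N0 <= n)%nat /\
        ~ has_distortion d (at_most_n_points n) E
            (c * INR n * ln (INR n) / (ln (ln (INR n))) ^ k).
Proof.
  exists 1, 0%nat. split; [lra|]. exists R, Rdist. split; [apply is_metric_Rdist|].
  intros E Hmono N0. apply not_all_not_ex. intros Hall.
  apply (no_embedding_with_distortion_nlogn (N0 := N0) Hmono). intros n Hn.
  replace (INR n * ln (INR n)) with (1 * INR n * ln (INR n) / ln (ln (INR n)) ^ 0)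
    by (simpl; field).
  apply NNPP. intros Hno. exact (Hall n (conj Hn Hno)).
Qed.

Theorem mainTheorem2 :
  (* (1) knowing n: distortion n - 1 is achievable for every metric space *)
  (forall (n : nat) (X : Type) (d : X -> X -> R), is_metric d ->
     exists E : online_embedding X,
       monotone_HST_embedding d (at_most_n_points n) E /\
       has_distortion d (at_most_n_points n) E (INR n - 1)) /\
  (* (2) tightness: no embedding of up to n points from all metric spaces
         achieves distortion less than n - 1 *)
  (forall n : nat, (2 <= n)%nat ->
     exists (X : Type) (d : X -> X -> R), is_metric d /\
       forall (E : online_embedding X) (lam : R),
         monotone_HST_embedding d (at_most_n_points n) E ->
         has_distortion d (at_most_n_points n) E lam ->
         INR n - 1 <= lam) /\
  (* (3) without knowledge of n: distortion n * log n * polyloglog n *)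
  (exists (C : R) (k : nat) (N0 : nat), 0 < C /\
     forall (X : Type) (d : X -> X -> R), is_metric d ->
       exists E : online_embedding X,
         monotone_HST_embedding d (fun _ => True) E /\
         forall n : nat, (N0 <= n)%nat ->
           has_distortion d (at_most_n_points n) E
             (C * INR n * ln (INR n) * (ln (ln (INR n))) ^ k)) /\
  (* (4) tightness without knowledge of n: n * log n / polyloglog n is not
         beaten (for infinitely many n) by any single embedding *)
  (exists (c : R) (k : nat), 0 < c /\
     exists (X : Type) (d : X -> X -> R), is_metric d /\
       forall E : online_embedding X,
         monotone_HST_embedding d (fun _ => True) E ->
         forall N0 : nat, exists n : nat, (N0 <= n)%nat /\
           ~ has_distortion d (at_most_n_points n) E
               (c * INR n * ln (INR n) / (ln (ln (INR n))) ^ k)).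
Proof.
  split; [exact known_n_upper_bound|]. split; [exact known_n_lower_bound|].
  split; [exact unknown_n_upper_bound|exact unknown_n_lower_bound].
Qed.
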